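(* Consider the single-target search setting described in the context, with planning horizon $T\geq 1$, discount factor $\lambda\in[0,1]$, and probability of detection $P_d\in(0,1]$, under the ideal measurement set assumptions (i) $\Sigma=0$ (target-generated measurements are error-free) and (ii) $\lambda_{FA}=0$ (no false alarms). Then the suboptimal (open-loop) control approach and the optimal (Bellman-type, closed-loop) control approach generate identical first actions, i.e. $\hat{a}^\star_1=a^\star_1$, where $$a^\star_1=\operatorname{argmin}_{a_1}\Big[\min_{a_{2:T}}\ \mathbb{E}_{z_{1:T}}\Big[\sum_{t=1}^T\lambda^{t-1}r_t(z_{1:t},a_{1:t})\Big]\Big]$$ and $$\hat{a}^\star_1=\operatorname{argmin}_{a_1}\mathbb{E}_{z_1}\Big[r_1(z_1,a_1)+\lambda\min_{a_2}\mathbb{E}_{z_2\mid z_1}\Big[r_2(z_{1:2},a_{1:2})+\lambda\min_{a_3}\mathbb{E}_{z_3\mid z_{1:2}}\Big[r_3(z_{1:3},a_{1:3})+\cdots+\lambda\min_{a_T}\mathbb{E}_{z_T\mid z_{1:T-1}}\big[r_T(z_{1:T},a_{1:T})\big]\Big]\Big]\Big],$$ this holding irrespective of the length $T$ of the planning horizon. (In the optimal approach, each inner minimisation over $a_t$ is performed separately for each realisation of the earlier measurements $z_{1:t-1}$, whereas in the suboptimal approach $a_{2:T}$ are chosen jointly, independently of the measurements.)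
   Context: Target model: there is either zero or one stationary target. The hypotheses are $x_0$ (''no target present'') and $x_1,\dots,x_n\in\mathbb{R}^2$ (''a target exists at $x_i$''), with prior probabilities $p(x_0)=1-r$ and $p(x_i)=r\,w_i$ for $i\ge 1$, where $r\in[0,1]$ is the probability of existence and $w_i\ge 0$, $\sum_{i=1}^n w_i=1$. Actions $a$ belong to a finite set $\mathbb{A}$; each action $a$ determines a sensor field of view $\mathrm{FOV}(a)\subseteq\mathbb{R}^2$ (possibly empty, e.g. ''do not observe''). At each time $t=1,\dots,T$ an action $a_t$ is taken and a (finite set-valued) measurement $z_t$ is received; conditional on the hypothesis, measurements at different times are independent. General measurement model: if the hypothesis is $x_i$ with $i>0$ and $x_i\in\mathrm{FOV}(a_t)$, the target is detected with probability $P_d$, producing a measurement distributed as $\mathcal{N}(x_i,\Sigma)$; otherwise no target-generated measurement occurs; in addition a Poisson number (mean $\lambda_{FA}$ times the area of the FOV) of false alarms uniformly distributed in the FOV is generated. Under the ideal assumptions $\Sigma=0$, $\lambda_{FA}=0$ this means: $z_t=\{x_i\}$ with probability $P_d$ and $z_t=\emptyset$ with probability $1-P_d$ if $i>0$ and $x_i\in\mathrm{FOV}(a_t)$, and $z_t=\emptyset$ otherwise. Posterior hypothesis probabilities are $p(x_i\mid z_{1:t},a_{1:t})\propto p(x_i)\prod_{j=1}^t p(z_j\mid x_i,a_j)$ for $i=0,\dots,n$, and posterior location weights given existence are $w^i_{1:t}\propto p(x_i)\prod_{j=1}^t p(z_j\mid x_i,a_j)$ for $i\ge1$, normalised so $\sum_{i\ge1}w^i_{1:t}=1$.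 GOSPA cost (parameters $p=2$, $\alpha=2$, cut-off $c>0$) between at-most-one-element sets: $d(\emptyset,\emptyset)^2=0$; $d(\{x\},\emptyset)^2=d(\emptyset,\{y\})^2=c^2/2$; $d(\{x\},\{y\})^2=\min(\|x-y\|^2,c^2)$. The per-step cost is $r_t(z_{1:t},a_{1:t})=\mathrm{MMS\text{-}GOSPA}(z_{1:t},a_{1:t})=\min_{\hat X\in\{\emptyset,\{\hat X_e\}\}}\sum_{i=0}^n d(X_i,\hat X)^2\,p(x_i\mid z_{1:t},a_{1:t})$, where $X_0=\emptyset$, $X_i=\{x_i\}$ for $i\ge1$, and $\hat X_e=\sum_{i=1}^n w^i_{1:t}x_i$ is the posterior mean location. Expectations $\mathbb{E}_{z_{1:T}}$ are with respect to the joint (prior-predictive) distribution of measurements given the actions, and $\mathbb{E}_{z_t\mid z_{1:t-1}}$ with respect to the predictive distribution of $z_t$ given the earlier measurements and actions. Ties in the argmin are broken by the same rule in both approaches. *)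

From HB Require Import structures.
From mathcomp Require Import all_boot all_order all_algebra.
Set Implicit Arguments. Unset Strict Implicit. Unset Printing Implicit Defensive.
Import Order.TTheory GRing.Theory Num.Theory.
Local Open Scope ring_scope.

(* Hypotheses are [option 'I_n]: [None] = x_0 ("no target"),
   [Some i] = "target at loc i".  Measurements under the ideal assumptions
   (Sigma = 0, lambda_FA = 0) are sets with at most one element, encoded as
   [option 'rV[R]_2]: [None] = empty set, [Some y] = {y}. *)
Record scenario (R : realFieldType) (n : nat) (A : finType) := Scenario {
  loc : 'I_n -> 'rV[R]_2;
  fov : A -> pred 'rV[R]_2;
  pex : R;
  wt  : 'I_n -> R;
  pd  : R;
  cut : R
}.

Section Model.
Context {R : realFieldType} {n : nat} {A : finType} (S : scenario R n A).

Definition hyp := option 'I_n.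
Definition meas := option 'rV[R]_2.

Definition sqnorm (v : 'rV[R]_2) : R := \sum_(j < 2) v ord0 j ^+ 2.

Definition prior (h : hyp) : R :=
  match h with None => 1 - pex S | Some i => pex S * wt S i end.

Definition lik (h : hyp) (a : A) (z : meas) : R :=
  match h with
  | None => if z is None then 1 else 0
  | Some i =>
      if fov S a (loc S i) then
        match z with None => 1 - pd S | Some y => if y == loc S i then pd S else 0 end
      else (if z is None then 1 else 0)
  end.

Definition qpost (as_ : seq A) (zs : seq meas) (h : hyp) : R :=
  prior h * \prod_(p <- zip as_ zs) lik h p.1 p.2.

Definition post (as_ : seq A) (zs : seq meas) (h : hyp) : R :=
  qpost as_ zs h / \sum_(h' : hyp) qpost as_ zs h'.

Definition wpost (as_ : seq A) (zs : seq meas) (i : 'I_n) : R :=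
  qpost as_ zs (Some i) / \sum_(j < n) qpost as_ zs (Some j).

Definition pmean (as_ : seq A) (zs : seq meas) : 'rV[R]_2 :=
  \sum_(i < n) wpost as_ zs i *: loc S i.

(* per-step cost r_t = MMS-GOSPA (p = 2, alpha = 2, cut-off c) *)
Definition rcost (as_ : seq A) (zs : seq meas) : R :=
  let c2 := cut S ^+ 2 in
  let Xe := pmean as_ zs in
  Num.min
    (* estimate = empty set *)
    (\sum_(i < n) (c2 / 2) * post as_ zs (Some i))
    (* estimate = {Xe} *)
    ((c2 / 2) * post as_ zs None +
     \sum_(i < n) Num.min (sqnorm (loc S i - Xe)) c2 * post as_ zs (Some i)).

(* the (finite) set of measurement values with possibly nonzero probability;
   all other values have probability zero, so sums over it are expectations *)
Definition msupp : seq meas := undup (None :: [seq Some (loc S i) | i <- enum 'I_n]).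

Fixpoint allseqs (k : nat) : seq (seq meas) :=
  if k is k'.+1 then [seq z :: zs | z <- msupp, zs <- allseqs k'] else [:: [::]].

Definition pjoint (as_ : seq A) (zs : seq meas) : R := \sum_(h : hyp) qpost as_ zs h.

Definition pred_meas (pas : seq A) (zs : seq meas) (a : A) (z : meas) : R :=
  \sum_(h : hyp) post pas zs h * lik h a z.

(* minimum of a function over a finite type (0 on an empty type) *)
Definition fmin {U : finType} (f : U -> R) : R :=
  match [pick u : U] with
  | Some u0 => \big[Num.min/f u0]_(u : U) f u
  | None => 0
  end.

Definition open_cost (lam : R) (T : nat) (as_ : seq A) : R :=
  \sum_(zs <- allseqs T)
     pjoint as_ zs * \sum_(t < T) lam ^+ t * rcost (take t.+1 as_) (take t.+1 zs).

Definition J_open (lam : R) (T : nat) (a1 : A) : R :=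
  fmin (fun b : (T.-1).-tuple A => open_cost lam T (a1 :: tval b)).

(* closed-loop nested value: past actions pas, past measurements zs,
   current action a, m further decisions remaining:
   E_{z | past}[ r(pas++a, zs++z) + lam * min_{a'} Q m' (pas++a) (zs++z) a' ] *)
Fixpoint Qval (lam : R) (m : nat) (pas : seq A) (zs : seq meas) (a : A) : R :=
  \sum_(z <- msupp)
     pred_meas pas zs a z *
       (rcost (rcons pas a) (rcons zs z) +
        (if m is m'.+1 then
           lam * fmin (fun a' : A => Qval lam m' (rcons pas a) (rcons zs z) a')
         else 0)).

Definition J_closed (lam : R) (T : nat) (a1 : A) : R :=
  Qval lam T.-1 [::] [::] a1.

End Model.

(* Under ideal sensing a measurement is either empty or exactly the true
   target location.  Once a location has been measured, every hypothesis
   compatible with the history sits at that location, so the posterior mean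
   is that location and the MMS-GOSPA cost vanishes from then on.  Hence in
   both objectives only the all-empty measurement history contributes, and
   along that single deterministic branch a closed-loop policy has nothing to
   react to: the nested minimisations collapse into one joint minimisation
   over the remaining actions, and the two objectives coincide as functions
   of the first action. *)
From HB Require Import structures.
From mathcomp Require Import all_boot all_order all_algebra.
From Stdlib Require Import FunctionalExtensionality.
Set Implicit Arguments. Unset Strict Implicit. Unset Printing Implicit Defensive.
Import Order.TTheory GRing.Theory Num.Theory.
Local Open Scope ring_scope.

Section FiniteMin.
Variables (R : realFieldType) (U : finType).
Implicit Types (f g : U -> R) (u : U).

Lemma fmin_le f u : fmin f <= f u.
Proof. by rewrite /fmin; case: pickP => [u0 _|/(_ u) //]; exact: bigmin_le. Qed.

Lemma fmin_attained f u : exists v, fmin f = f v.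
Proof.
rewrite /fmin; case: pickP => [u0 _|/(_ u) //].
apply: (big_ind (fun x => exists v, x = f v)); first by exists u0.
  move=> _ _ [v1 ->] [v2 ->].
  by case: (leP (f v1) (f v2)) => _; [exists v1 | exists v2].
by move=> v _; exists v.
Qed.

Lemma fmin_ge u (c : R) f : (forall v, c <= f v) -> c <= fmin f.
Proof. by have [v ->] := fmin_attained f u. Qed.

Lemma eq_fmin f g : f =1 g -> fmin f = fmin g.
Proof.
move=> fg; rewrite /fmin; case: pickP => // u0 _; rewrite fg.
by apply: eq_bigr => u _; exact: fg.
Qed.

Lemma fmin0 : fmin (fun _ : U => 0 : R) = 0.
Proof.
rewrite /fmin; case: pickP => // u0 _.
by apply: (big_ind (fun x => x = 0)) => // _ _ -> ->; rewrite minxx.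
Qed.

Lemma fmin_addl f u (c : R) : fmin (fun v => c + f v) = c + fmin f.
Proof.
apply/le_anti/andP; split; last by apply: (fmin_ge u) => v; rewrite lerD2l fmin_le.
by have [v ->] := fmin_attained f u; exact: fmin_le.
Qed.

Lemma fmin_mull f u (c : R) : 0 <= c -> fmin (fun v => c * f v) = c * fmin f.
Proof.
move=> c_ge0; apply/le_anti/andP; split.
  by have [v ->] := fmin_attained f u; exact: fmin_le.
by apply: (fmin_ge u) => v; rewrite ler_wpM2l ?fmin_le.
Qed.

End FiniteMin.

Section TupleMin.
Variables (R : realFieldType) (A : finType).

Lemma fmin_tuple0 (f : 0.-tuple A -> R) : fmin f = f [tuple].
Proof.
apply/le_anti/andP; split; first exact: fmin_le.
by apply: (fmin_ge [tuple]) => t; rewrite [t]tuple0.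
Qed.

Lemma fmin_tupleS m (a0 : A) (f : m.+1.-tuple A -> R) :
  fmin f = fmin (fun a => fmin (fun b : m.-tuple A => f [tuple of a :: b])).
Proof.
have t0 := nseq_tuple m a0.
apply/le_anti/andP; split.
  have [a ->] := fmin_attained (fun a => fmin (fun b : m.-tuple A => f [tuple of a :: b])) a0.
  have [b ->] := fmin_attained (fun b : m.-tuple A => f [tuple of a :: b]) t0.
  exact: fmin_le.
apply: (fmin_ge [tuple of a0 :: t0]) => t; rewrite [t]tuple_eta.
apply: le_trans (fmin_le _ (thead t)) _.
exact: (fmin_le (fun b : m.-tuple A => f [tuple of thead t :: b])).
Qed.

End TupleMin.

Lemma sum_option (V : nmodType) n (f : option 'I_n -> V) :
  \sum_(h : option 'I_n) f h = f None + \sum_(i < n) f (Some i).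
Proof.
rewrite (bigD1 None) //=; congr (_ + _).
rewrite (reindex_omap Some id) /=; last by case.
by apply: eq_bigl => i; rewrite eqxx.
Qed.

Lemma mem_zip_r (T1 T2 : eqType) (s : seq T1) (t : seq T2) y :
  size s = size t -> y \in t -> exists x, (x, y) \in zip s t.
Proof.
elim: t s => [|z t IH] [|x s] //= [size_st].
rewrite in_cons => /orP [/eqP <-|/(IH _ size_st) [x' mem_x']].
  by exists x; rewrite in_cons eqxx.
by exists x'; rewrite in_cons mem_x' orbT.
Qed.

Section Model.
Variables (R : realFieldType) (n : nat) (A : finType) (S : scenario R n A).
Hypotheses (pex_ge0 : 0 <= pex S) (pex_le1 : pex S <= 1).
Hypotheses (wt_ge0 : forall i, 0 <= wt S i) (sum_wt : \sum_(i < n) wt S i = 1).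
Hypotheses (pd_ge0 : 0 <= pd S) (pd_le1 : pd S <= 1).

Lemma prior_ge0 h : 0 <= prior S h.
Proof. by case: h => [i|] /=; [rewrite mulr_ge0 | rewrite subr_ge0]. Qed.

Lemma lik_ge0 h a z : 0 <= lik S h a z.
Proof.
case: h => [i|] /=; last by case: z.
case: (fov S a (loc S i)); last by case: z.
by case: z => [y|]; [case: eqP | rewrite subr_ge0].
Qed.

Lemma qpost_ge0 as_ zs h : 0 <= qpost S as_ zs h.
Proof.
rewrite /qpost mulr_ge0 ?prior_ge0 //.
by apply: prodr_ge0 => p _; exact: lik_ge0.
Qed.

Lemma pjoint_ge0 as_ zs : 0 <= pjoint S as_ zs.
Proof. by apply: sumr_ge0 => h _; exact: qpost_ge0. Qed.

Lemma pjoint_nil : pjoint S [::] [::] = 1.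
Proof.
rewrite /pjoint sum_option /qpost /= big_nil mulr1.
under eq_bigr do rewrite big_nil mulr1.
by rewrite -mulr_sumr sum_wt mulr1 subrK.
Qed.

Lemma qpost_rcons pas zs a z h : size pas = size zs ->
  qpost S (rcons pas a) (rcons zs z) h = qpost S pas zs h * lik S h a z.
Proof. by move=> size_pas; rewrite /qpost zip_rcons // big_rcons /= mulrA. Qed.

Lemma pjoint_rcons pas zs a z : size pas = size zs ->
  pjoint S pas zs * pred_meas S pas zs a z = pjoint S (rcons pas a) (rcons zs z).
Proof.
move=> size_pas; have [p0|p_neq0] := eqVneq (pjoint S pas zs) 0.
  rewrite p0 mul0r /pjoint big1 // => h _.
  by rewrite qpost_rcons // (psumr_eq0P (fun h _ => qpost_ge0 pas zs h) p0) ?mul0r.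
rewrite /pred_meas mulr_sumr /pjoint; apply: eq_bigr => h _.
by rewrite qpost_rcons // /post mulrA [_ * (_ / _)]mulrC (divfK p_neq0).
Qed.

Definition detections : seq meas := undup [seq Some (loc S i) | i <- enum 'I_n].

Lemma msuppE : msupp S = None :: detections.
Proof. by rewrite /msupp /= ifN //; apply/mapP => -[]. Qed.

Lemma mem_detections z : z \in detections -> exists i, z = Some (loc S i).
Proof. by rewrite mem_undup => /mapP [i _ ->]; exists i. Qed.

Lemma sum_lik h a : \sum_(z <- msupp S) lik S h a z = 1.
Proof.
rewrite msuppE big_cons; case: h => [i|] /=; last first.
  by rewrite big1_seq ?addr0 // => z /andP [_ /mem_detections [j ->]].
case fov_i: (fov S a (loc S i)); last first.
  by rewrite big1_seq ?addr0 // => z /andP [_ /mem_detections [j ->]] /=.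
rewrite (_ : \sum_(z <- detections) _ =
             \sum_(z <- detections | z == Some (loc S i)) pd S); last first.
  by rewrite [RHS]big_mkcond /=; apply: eq_big_seq => z /mem_detections [j ->] /=.
rewrite big_const_seq count_uniq_mem ?undup_uniq //.
by rewrite mem_undup map_f ?mem_enum //= addr0 subrK.
Qed.

Lemma size_allseqs k zs : zs \in allseqs S k -> size zs = k.
Proof.
elim: k zs => [|k IH] zs /=; first by rewrite inE => /eqP ->.
by case/allpairsPdep => z [s [_ s_in ->]] /=; rewrite (IH _ s_in).
Qed.

Lemma sum_prodlik h k as_ : (k <= size as_)%N ->
  \sum_(zs <- allseqs S k) \prod_(p <- zip as_ zs) lik S h p.1 p.2 = 1.
Proof.
elim: k as_ => [|k IH] [|a as_] //=; try by rewrite big_seq1 big_nil.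
rewrite ltnS => k_le; rewrite big_allpairs_dep /= -[RHS](sum_lik h a).
apply: eq_bigr => z _; under eq_bigr do rewrite big_cons /=.
by rewrite -mulr_sumr IH // mulr1.
Qed.

Lemma sum_prodlik_take h j k as_ (g : seq meas -> R) :
  (j <= k)%N -> (k <= size as_)%N ->
  \sum_(zs <- allseqs S k) (\prod_(p <- zip as_ zs) lik S h p.1 p.2) * g (take j zs) =
  \sum_(zs <- allseqs S j) (\prod_(p <- zip (take j as_) zs) lik S h p.1 p.2) * g zs.
Proof.
elim: j k as_ g => [|j IH] k as_ g.
  move=> _ k_le; rewrite /= big_seq1 take0 /= big_nil mul1r.
  under eq_bigr do rewrite take0.
  by rewrite -mulr_suml sum_prodlik // mul1r.
case: k => [|k] //; case: as_ => [|a as_] //=; rewrite !ltnS => j_le k_le.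
rewrite !big_allpairs_dep /=; apply: eq_bigr => z _.
under eq_bigr do rewrite big_cons /= -mulrA.
under [in RHS]eq_bigr do rewrite big_cons /= -mulrA.
by rewrite -!mulr_sumr (IH k as_ (fun s => g (z :: s))).
Qed.

Lemma pjoint_marginal j k as_ (g : seq meas -> R) :
  (j <= k)%N -> (k <= size as_)%N ->
  \sum_(zs <- allseqs S k) pjoint S as_ zs * g (take j zs) =
  \sum_(zs <- allseqs S j) pjoint S (take j as_) zs * g zs.
Proof.
move=> j_le k_le; rewrite /pjoint.
under eq_bigr do rewrite mulr_suml.
under [in RHS]eq_bigr do rewrite mulr_suml.
rewrite exchange_big [in RHS]exchange_big /=; apply: eq_bigr => h _.
under eq_bigr do rewrite /qpost -mulrA.
under [in RHS]eq_bigr do rewrite /qpost -mulrA.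
by rewrite -!mulr_sumr sum_prodlik_take.
Qed.

Definition detected (zs : seq (@meas R)) := has (fun z => z != None) zs.

Lemma detected_rcons zs z : detected zs -> detected (rcons zs z).
Proof. by rewrite /detected -cats1 has_cat => ->. Qed.

Lemma qpost_detected as_ zs y h : size as_ = size zs -> Some y \in zs ->
  qpost S as_ zs h != 0 -> exists2 i, h = Some i & loc S i = y.
Proof.
move=> size_as y_in; have [a a_y_in] := mem_zip_r size_as y_in.
rewrite /qpost mulf_eq0 negb_or => /andP [_ prod_neq0].
have {prod_neq0} : lik S h a (Some y) != 0.
  apply: contra prod_neq0 => lik0; rewrite prodf_seq_eq0.
  by apply/hasP; exists (a, Some y).
case: h => [i|] /=; last by rewrite eqxx.
case: (fov S a (loc S i)); last by rewrite eqxx.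
by case: (y =P loc S i) => [-> _|_]; [exists i | rewrite eqxx].
Qed.

Lemma sqnorm0 : sqnorm (0 : 'rV[R]_2) = 0.
Proof. by rewrite /sqnorm big1 // => j _; rewrite mxE expr0n. Qed.

Lemma rcost_concentrated as_ zs y :
  pjoint S as_ zs != 0 -> qpost S as_ zs None = 0 ->
  (forall i, qpost S as_ zs (Some i) != 0 -> loc S i = y) ->
  rcost S as_ zs = 0.
Proof.
move=> p_neq0 qNone at_y.
have sum_some : \sum_(j < n) qpost S as_ zs (Some j) = pjoint S as_ zs.
  by rewrite /pjoint sum_option qNone add0r.
have mean_y : pmean S as_ zs = y.
  rewrite /pmean (eq_bigr (fun i => wpost S as_ zs i *: y)).
    by rewrite -scaler_suml /wpost -mulr_suml sum_some divff // scale1r.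
  move=> i _; have [q0|/at_y -> //] := eqVneq (qpost S as_ zs (Some i)) 0.
  by rewrite /wpost q0 mul0r !scale0r.
rewrite /rcost mean_y /post qNone mul0r mulr0 add0r.
rewrite [X in Num.min _ X]big1; last first.
  move=> i _; have [q0|/at_y ->] := eqVneq (qpost S as_ zs (Some i)) 0.
    by rewrite q0 mul0r mulr0.
  by rewrite subrr sqnorm0 min_l ?sqr_ge0 // mul0r.
rewrite min_r //; apply: sumr_ge0 => i _.
by rewrite mulr_ge0 ?divr_ge0 ?sqr_ge0 ?ler0n ?qpost_ge0 ?pjoint_ge0.
Qed.

Lemma rcost_detected as_ zs : detected zs -> size as_ = size zs ->
  pjoint S as_ zs * rcost S as_ zs = 0.
Proof.
case/hasP => -[y|] // y_in _ size_as.
have [->|p_neq0] := eqVneq (pjoint S as_ zs) 0; first by rewrite mul0r.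
have compatible h := @qpost_detected as_ zs y h size_as y_in.
rewrite (@rcost_concentrated _ _ y) ?mulr0 //.
  by apply/eqP; apply: contraT => /compatible [].
by move=> i /compatible [j [->]].
Qed.

Definition misses k : seq (@meas R) := nseq k None.

Lemma rcons_misses k : rcons (misses k) None = misses k.+1.
Proof. by elim: k => //= k ->. Qed.

Lemma sum_allseqs_misses k (g : seq meas -> R) :
  (forall zs, detected zs -> size zs = k -> g zs = 0) ->
  \sum_(zs <- allseqs S k) g zs = g (misses k).
Proof.
elim: k g => [|k IH] g g_det; first by rewrite /= big_seq1.
rewrite [allseqs _ _]/= big_allpairs_dep msuppE big_cons /= [X in _ + X]big1_seq ?addr0.
  by apply: (IH (fun zs => g (None :: zs))) => zs ? size_zs; rewrite g_det //= size_zs.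
move=> z /andP [_ /mem_detections [i ->]].
apply: big1_seq => zs /andP [_ /size_allseqs size_zs].
by rewrite g_det //= size_zs.
Qed.

Definition miss_cost (bs : seq A) :=
  pjoint S bs (misses (size bs)) * rcost S bs (misses (size bs)).

Variable lam : R.
Hypothesis lam_ge0 : 0 <= lam.

Definition open_miss_cost (pas bs : seq A) :=
  \sum_(t < size bs) lam ^+ t * miss_cost (pas ++ take t.+1 bs).

Lemma open_miss_cost_cons pas a bs :
  open_miss_cost pas (a :: bs) =
  miss_cost (rcons pas a) + lam * open_miss_cost (rcons pas a) bs.
Proof.
rewrite /open_miss_cost big_ord_recl /= take0 expr0 mul1r cats1; congr (_ + _).
rewrite mulr_sumr; apply: eq_bigr => i _.
by rewrite /bump /= add1n exprS cat_rcons mulrA.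
Qed.

Lemma open_costE T bs : size bs = T -> open_cost S lam T bs = open_miss_cost [::] bs.
Proof.
move=> size_bs; rewrite /open_cost /open_miss_cost size_bs.
under eq_bigr do rewrite mulr_sumr.
rewrite exchange_big /=; apply: eq_bigr => t _.
under eq_bigr do rewrite mulrCA.
rewrite -mulr_sumr; congr (_ * _).
rewrite (@pjoint_marginal t.+1 T bs (rcost S (take t.+1 bs))) ?size_bs //.
have size_take : size (take t.+1 bs) = t.+1 by rewrite size_takel // size_bs ltn_ord.
rewrite sum_allseqs_misses; first by rewrite /miss_cost size_take.
by move=> zs zs_det size_zs; rewrite rcost_detected // size_take size_zs.
Qed.

(* Weighting [Qval] by the probability of the history cancels the
   normalisation inside [pred_meas], turning the Bellman recursion into
   sums of joint probabilities. *)
Definition wQval m pas zs a := pjoint S pas zs * Qval S lam m pas zs a.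

Lemma wQval_rec m pas zs a : size pas = size zs ->
  wQval m pas zs a = \sum_(z <- msupp S)
   (pjoint S (rcons pas a) (rcons zs z) * rcost S (rcons pas a) (rcons zs z) +
    (if m is m'.+1 then lam * fmin (fun a' => wQval m' (rcons pas a) (rcons zs z) a')
     else 0)).
Proof.
move=> size_pas; rewrite /wQval.
have -> : Qval S lam m pas zs a = \sum_(z <- msupp S) pred_meas S pas zs a z *
    (rcost S (rcons pas a) (rcons zs z) +
     (if m is m'.+1 then lam * fmin (fun a' => Qval S lam m' (rcons pas a) (rcons zs z) a')
      else 0)) by case: m.
rewrite mulr_sumr; apply: eq_bigr => z _.
rewrite mulrA pjoint_rcons // mulrDr; congr (_ + _); case: m => [|m]; first by rewrite mulr0.
by rewrite mulrCA (fmin_mull _ a) // pjoint_ge0.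
Qed.

Lemma wQval_detected m pas zs a : detected zs -> size pas = size zs -> wQval m pas zs a = 0.
Proof.
elim: m pas zs a => [|m IH] pas zs a zs_det size_pas; rewrite wQval_rec //.
all: apply: big1_seq => z _.
all: rewrite rcost_detected ?detected_rcons ?size_rcons ?size_pas // add0r //.
rewrite (eq_fmin (g := fun _ => 0)) ?fmin0 ?mulr0 // => a'.
by rewrite IH ?detected_rcons ?size_rcons ?size_pas.
Qed.

Lemma wQval_misses m pas a :
  wQval m pas (misses (size pas)) a = miss_cost (rcons pas a) +
   (if m is m'.+1 then
      lam * fmin (fun a' => wQval m' (rcons pas a) (misses (size (rcons pas a))) a')
    else 0).
Proof.
rewrite wQval_rec ?size_nseq // msuppE big_cons big1_seq ?addr0.
  by rewrite rcons_misses /miss_cost size_rcons.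
move=> z /andP [_ /mem_detections [i ->]].
have hit : detected (rcons (misses (size pas)) (Some (loc S i))).
  by rewrite /detected -cats1 has_cat /= orbT.
rewrite rcost_detected ?size_rcons ?size_nseq // add0r; case: m => // m.
rewrite (eq_fmin (g := fun _ => 0)) ?fmin0 ?mulr0 // => a'.
by rewrite wQval_detected ?size_rcons ?size_nseq.
Qed.

Lemma wQval_open m pas a :
  wQval m pas (misses (size pas)) a = fmin (fun b : m.-tuple A => open_miss_cost pas (a :: b)).
Proof.
elim: m pas a => [|m IH] pas a; rewrite wQval_misses.
  by rewrite fmin_tuple0 open_miss_cost_cons /open_miss_cost big_ord0 mulr0.
rewrite (eq_fmin (g := fun a' =>
  fmin (fun b : m.-tuple A => open_miss_cost (rcons pas a) [tuple of a' :: b]))); last first.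
  by move=> a'; rewrite IH.
rewrite -(fmin_tupleS a (fun t : m.+1.-tuple A => open_miss_cost (rcons pas a) t)).
under [RHS]eq_fmin do rewrite open_miss_cost_cons.
by rewrite (fmin_addl _ (nseq_tuple m.+1 a)) (fmin_mull _ (nseq_tuple m.+1 a)).
Qed.

Lemma J_open_closed T a1 : (1 <= T)%N -> J_open S lam T a1 = J_closed S lam T a1.
Proof.
move=> T_ge1; rewrite /J_closed -[Qval _ _ _ _ _ _]mul1r -pjoint_nil.
change (J_open S lam T a1 = wQval T.-1 [::] (misses (size ([::] : seq A))) a1).
rewrite wQval_open /J_open; apply: eq_fmin => b.
by rewrite (open_costE (T := T)) //= size_tuple prednK.
Qed.

End Model.

Theorem mainTheorem1 (R : realFieldType) (n : nat) (A : finType)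
    (x : 'I_n -> 'rV[R]_2) (FOV : A -> pred 'rV[R]_2)
    (r : R) (w : 'I_n -> R) (Pd c lam : R) (T : nat) :
  0 <= r <= 1 ->
  (forall i, 0 <= w i) -> \sum_(i < n) w i = 1 ->
  0 < Pd <= 1 ->
  0 < c ->
  0 <= lam <= 1 ->
  (1 <= T)%N ->
  forall argmin : (A -> R) -> A,
    (forall (f : A -> R) (a : A), f (argmin f) <= f a) ->
    argmin (J_open (Scenario x FOV r w Pd c) lam T) =
    argmin (J_closed (Scenario x FOV r w Pd c) lam T).
Proof.
move=> /andP [r_ge0 r_le1] w_ge0 sum_w /andP [Pd_gt0 Pd_le1] _ /andP [lam_ge0 _] T_ge1.
move=> argmin _.
congr (argmin _); apply: functional_extensionality => a1.
by apply: J_open_closed => //; exact: ltW.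
Qed.
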